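(* Let $m\ge1$, $k\ge1$, and let $d_0,\dots,d_{k-1}\in S$ be the coefficients of $t^0,\dots,t^{k-1}$ of $\det X(t)$ for the generic $m\times m$ matrix $X(t)$. With respect to the graded reverse lexicographic order described below, $\{d_0,\dots,d_{k-1}\}$ is a Gröbner basis of $\mathcal I^{m,m}_{m,k}$. Moreover, writing an index $0\le q\le k-1$ as $q=\lambda m+\mu$ with $0\le\mu\le m-1$, the leading monomial of $d_q$ is $$\prod_{i=1}^{m-\mu}x^{(\lambda)}_{i,\,m-\mu+1-i}\ \cdot\prod_{i=m-\mu+1}^{m}x^{(\lambda+1)}_{i,\,2m-\mu+1-i},$$ and the leading monomials of distinct $d_q$ involve disjoint sets of variables.
   Context: Let $F$ be an algebraically closed field, $S=F[x^{(l)}_{i,j}:1\le i,j\le m,\ 0\le l\le k-1]$, and $X(t)$ the $m\times m$ matrix over $S[t]/(t^k)$ with entries $x_{i,j}(t)=\sum_{l=0}^{k-1}x^{(l)}_{i,j}t^l$; every element of $S[t]/(t^k)$ is uniquely $\sum_{l=0}^{k-1}c_lt^l$, $c_l\in S$. $\mathcal I^{m,m}_{m,k}$ is the ideal of $S$ generated by the coefficients of all powers of $t$ of $\det X(t)$. The variables are totally ordered by: $x^{(l)}_{i,j}>x^{(l')}_{i',j'}$ iff $l>l'$, or $l=l'$ and $(i,j)$ precedes $(i',j')$ lexicographically (i.e. $x^{(k-1)}_{1,1}>x^{(k-1)}_{1,2}>\dots>x^{(k-1)}_{m,m}>x^{(k-2)}_{1,1}>\dots>x^{(0)}_{m,m}$).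 The graded reverse lexicographic (grevlex) order on monomials with respect to this variable order is: monomials are first compared by total degree; for equal total degree, $\alpha>\beta$ iff, listing variables from largest to smallest and viewing exponent vectors in $\mathbb Z^{km^2}$, the rightmost (i.e. smallest-variable) nonzero entry of $\alpha-\beta$ is negative. *)

From HB Require Import structures.
From mathcomp Require Import all_boot all_order all_algebra.
From mathcomp Require Import mpoly.
Set Implicit Arguments. Unset Strict Implicit. Unset Printing Implicit Defensive.
Import Order.TTheory GRing.Theory.
Local Open Scope ring_scope.

(* Variables x^{(l)}_{i,j} are indexed by triples v = (l, i, j) with
   l : 'I_k, i j : 'I_m (0-based indices: x^{(l)}_{i,j} of the paper is
   (l, i-1, j-1) here). *)
Definition vtriple (k m : nat) := ('I_k * 'I_m * 'I_m)%type.
Definition nvars (k m : nat) : nat := #|{: vtriple k m}|.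
Definition vidx (k m : nat) (v : vtriple k m) : 'I_(nvars k m) := enum_rank v.

Definition S (F : closedFieldType) (k m : nat) := {mpoly F[nvars k m]}.

Definition xvar (F : closedFieldType) (k m : nat) (v : vtriple k m) : S F k m :=
  'X_(vidx v).

Definition Xt (F : closedFieldType) (k m : nat) : 'M[{poly S F k m}]_m :=
  \matrix_(i < m, j < m) \sum_(l < k) (xvar F (l, i, j))%:P * 'X^l.

(* d_q = coefficient of t^q in det X(t); for q < k this is the same as the
   coefficient of t^q of det X(t) computed in S[t]/(t^k), since reduction
   modulo t^k is a ring morphism. *)
Definition dcoef (F : closedFieldType) (k m : nat) (q : nat) : S F k m :=
  (\det (Xt F k m))`_q.

Definition in_I (F : closedFieldType) (k m : nat) (f : S F k m) : Prop :=
  exists c : 'I_k -> S F k m, f = \sum_(q < k) c q * dcoef F k m q.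

Definition var_gt (k m : nat) (v w : vtriple k m) : bool :=
  let: (l, i, j) := v in let: (l', i', j') := w in
  (l' < l)%N || ((l == l') && ((i < i')%N || ((i == i') && (j < j')%N))).

Definition expo (k m : nat) (a : 'X_{1..nvars k m}) (v : vtriple k m) : nat :=
  a (vidx v).

Definition grevlex_gt (k m : nat) (a b : 'X_{1..nvars k m}) : Prop :=
  (mdeg b < mdeg a)%N \/
  (mdeg a = mdeg b /\
   exists v : vtriple k m, (expo a v < expo b v)%N /\
     forall w : vtriple k m, var_gt v w -> expo a w = expo b w).

Definition is_LM (F : closedFieldType) (k m : nat) (p : S F k m)
  (mm : 'X_{1..nvars k m}) : Prop :=
  mm \in msupp p /\
  forall mm' : 'X_{1..nvars k m}, mm' \in msupp p -> mm' != mm -> grevlex_gt mm mm'.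

Definition mdivides (n : nat) (a b : 'X_{1..n}) : Prop := forall i, (a i <= b i)%N.

Definition is_groebner_basis_d (F : closedFieldType) (k m : nat) : Prop :=
  (forall q : 'I_k, in_I (dcoef F k m q)) /\
  forall f : S F k m, in_I f -> f != 0 ->
    forall mf, is_LM f mf ->
      exists q : 'I_k, exists mq, is_LM (dcoef F k m q) mq /\ mdivides mq mf.

(* The claimed leading monomial of d_q, q = lambda*m + mu, 0 <= mu < m,
   written as the product of the variables v = (l,i,j) (0-based) with
     l = lambda,     i < m - mu,  i + j = m - mu - 1     (i.e. paper's
                      x^{(lambda)}_{i, m-mu+1-i}, 1 <= i <= m-mu), or
     l = lambda + 1, m - mu <= i, i + j = 2m - mu - 1    (paper's
                      x^{(lambda+1)}_{i, 2m-mu+1-i}, m-mu+1 <= i <= m). *)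
Definition in_claimed_LM (k m q : nat) (v : vtriple k m) : bool :=
  let lam := (q %/ m)%N in let mu := (q %% m)%N in
  let: (l, i, j) := v in
  [|| [&& (l == lam :> nat), (i < m - mu)%N & (i + j == m - mu - 1)%N]
    | [&& (l == lam.+1 :> nat), (m - mu <= i)%N & (i + j == 2 * m - mu - 1)%N]].

Definition claimed_LM (F : closedFieldType) (k m q : nat) : S F k m :=
  \prod_(v : vtriple k m | in_claimed_LM q v) xvar F v.

From HB Require Import structures.
From mathcomp Require Import all_boot all_order all_algebra.
From mathcomp Require Import mpoly.
From mathcomp Require Import fingroup perm.
From mathcomp Require Import zify.
Set Implicit Arguments. Unset Strict Implicit. Unset Printing Implicit Defensive.
Import Order.TTheory GRing.Theory.
Local Open Scope ring_scope.

(* Expanding the determinant, [d_q] is a signed sum of distinct monomials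
   [prod_i x^(L i)_(i, s i)], one for each permutation [s] and each [L] with
   [sum_i L i = q]; so its grevlex-leading monomial is the largest of these.
   Comparing at the smallest variable where two of them differ shows that the
   largest one puts the layers as low as possible ([lam] in the first [m - mu]
   rows, [lam + 1] in the others, where [q = lam m + mu]) and is antidiagonal
   in each block. These leading monomials are pairwise coprime, and a family
   with pairwise coprime leading monomials is a Groebner basis of the ideal it
   generates: in a representation [f = sum_i c_i g_i] whose top monomial
   cancels, two top terms can be traded against each other through the
   syzygy [g_j g_i - g_i g_j], until the top monomial is that of [f]. *)

(** * Graded reverse lexicographic orders *)

(* [key] ranks the variables: [key y < key x] means that [y] is the smaller one. *)
Section Grevlex.
Variables (n : nat) (key : 'I_n -> nat).
Hypothesis key_inj : injective key.
Implicit Types a b c : 'X_{1..n}.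

Definition grevlexb a b : bool :=
  (mdeg b < mdeg a)%N || (mdeg a == mdeg b) &&
  [exists x, (a x < b x)%N && [forall y, (key y < key x)%N ==> (a y == b y)]].

Lemma grevlexb_irr : irreflexive grevlexb.
Proof.
move=> a; rewrite /grevlexb ltnn /=; apply/negbTE; rewrite negb_and eqxx /=.
by apply/existsPn => x; rewrite ltnn.
Qed.

Lemma grevlexb_mdeg a b : grevlexb a b -> (mdeg b <= mdeg a)%N.
Proof. by case/orP=> [/ltnW//|/andP [/eqP -> _]]. Qed.

Lemma grevlexb_trans : transitive grevlexb.
Proof.
move=> b a c; rewrite /grevlexb.
case/orP=> [h1|/andP [/eqP e1 /existsP [x1 /andP [h1 /forallP h1']]]];
case/orP=> [h2|/andP [/eqP e2 /existsP [x2 /andP [h2 /forallP h2']]]].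
- by rewrite (ltn_trans h2 h1).
- by rewrite -e2 h1.
- by rewrite e1 h2.
apply/orP; right; rewrite e1 e2 eqxx /=; apply/existsP.
have agree1 y : (key y < key x1)%N -> a y = b y by move/(implyP (h1' y))/eqP.
have agree2 y : (key y < key x2)%N -> b y = c y by move/(implyP (h2' y))/eqP.
case: (ltngtP (key x1) (key x2)) => hx.
- exists x1; rewrite -(agree2 _ hx) h1 /=; apply/forallP=> y; apply/implyP=> hy.
  by rewrite agree1 // agree2 // (ltn_trans hy hx).
- exists x2; rewrite (agree1 _ hx) h2 /=; apply/forallP=> y; apply/implyP=> hy.
  by rewrite agree1 ?agree2 // (ltn_trans hy hx).
- rewrite -(key_inj hx) in h2 agree2 *; exists x1; rewrite (ltn_trans h1 h2) /=.
  by apply/forallP=> y; apply/implyP=> hy; rewrite agree1 ?agree2.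
Qed.

Lemma grevlexb_total a b : a != b -> grevlexb a b || grevlexb b a.
Proof.
move=> nab; rewrite /grevlexb eq_sym.
case: (ltngtP (mdeg a) (mdeg b)) => //= _.
have [x0 hx0] : exists x, a x != b x.
  by apply/existsP; apply: contraR nab => /existsPn h; apply/eqP/mnmP => x; apply/eqP/negPn.
case: (@arg_minnP _ x0 (fun x => a x != b x) key hx0) => x hx hmin.
have agree y : (key y < key x)%N -> a y = b y.
  by move=> hy; apply/eqP; apply: contraTT hy => /hmin; rewrite -leqNgt.
case: (ltngtP (a x) (b x)) hx => // hab _; apply/orP; [left|right];
  apply/existsP; exists x; rewrite hab /=;
  by apply/forallP=> y; apply/implyP=> /agree ->.
Qed.

Lemma grevlexb_addr c a b : grevlexb a b -> grevlexb (a + c)%MM (b + c)%MM.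
Proof.
rewrite /grevlexb !mdegD ltn_add2r eqn_add2r.
case/orP=> [->//|/andP [-> /existsP [x /andP [h1 /forallP h2]]]].
apply/orP; right; apply/existsP; exists x; rewrite !mnmDE ltn_add2r h1 /=.
by apply/forallP=> y; apply/implyP=> hy; rewrite !mnmDE eqn_add2r (implyP (h2 y)).
Qed.

End Grevlex.

Lemma mdeg_bounded_wf n (gt : rel 'X_{1..n}) :
  irreflexive gt -> transitive gt -> (forall a b, gt a b -> mdeg b <= mdeg a)%N ->
  well_founded (fun b a => gt a b).
Proof.
move=> gt_irr gt_trans gt_mdeg a0; pose B := (mdeg a0).+1.
(* Below [a0] only the finitely many monomials of degree [< B] occur. *)
pose rank a := #|[pred b : 'X_{1..n < B} | gt a b]|.
suff acc N a : (mdeg a < B)%N -> (rank a <= N)%N -> Acc (fun b a => gt a b) a.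
  exact: acc _ a0 (ltnSn _) (leqnn _).
elim: N a => [|N IHN] a ha hr; constructor=> b hb;
  have hbB : (mdeg b < B)%N by apply: leq_ltn_trans (gt_mdeg _ _ hb) ha.
- suff : (0 < rank a)%N by rewrite leqn0 in hr; rewrite (eqP hr).
  by apply/card_gt0P; exists (BMultinom hbB).
- apply: IHN => //; rewrite -ltnS; apply: leq_trans hr; apply: proper_card.
  apply/properP; split; first by apply/subsetP=> x; rewrite !inE => /(gt_trans _ _ _ hb).
  by exists (BMultinom hbB); rewrite !inE //= gt_irr.
Qed.

(** * Families with pairwise coprime leading monomials *)

Lemma sumr_nat_delta (R : pzSemiRingType) (I : finType) (F : I -> R) i0 :
  \sum_t (t == i0)%:R * F t = F i0.
Proof. by rewrite (bigD1 i0) //= eqxx mul1r big1 ?addr0 // => t /negbTE ->; rewrite mul0r. Qed.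

Lemma mnm_le_coprime n (a b c : 'X_{1..n}) :
  (forall x, a x = 0%N \/ b x = 0%N) -> (a <= c + b)%MM -> (a <= c)%MM.
Proof.
move=> ab /mnm_lepP le_a; apply/mnm_lepP => x.
by have := le_a x; rewrite mnmDE; case: (ab x) => ->; lia.
Qed.

Lemma sumr_eq0_other (V : nmodType) (I : finType) (G : I -> V) i :
  \sum_t G t = 0 -> G i != 0 -> exists2 j, j != i & G j != 0.
Proof.
move=> sum0 Gi; case: (boolP [exists j, (j != i) && (G j != 0)]).
  by case/existsP=> j /andP [ji Gj]; exists j.
move/existsPn=> none; suff : G i == 0 by rewrite (negbTE Gi).
rewrite -sum0 (bigD1 i) //= big1 ?addr0 // => j ji.
by apply/eqP; move: (none j); rewrite ji negbK.
Qed.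

Lemma exists_neq0_summand (V : nmodType) (I : finType) (G : I -> V) :
  \sum_i G i != 0 -> exists i, G i != 0.
Proof.
move=> nz; apply/existsP; apply: contraNT nz => /existsPn none.
by rewrite big1 // => i _; apply/eqP; move: (none i); rewrite negbK.
Qed.

Lemma syzygy_shift (R : comPzRingType) (I : finType) (c g : I -> R) i j h :
  \sum_t (c t + (t == i)%:R * (h * g j) - (t == j)%:R * (h * g i)) * g t =
  \sum_t c t * g t.
Proof.
under eq_bigr => t _ do rewrite mulrBl mulrDl -!mulrA.
by rewrite sumrB big_split /= !sumr_nat_delta [g j * _]mulrC addrK.
Qed.

Section LeadingMonomials.
Variables (F : fieldType) (n : nat) (gt : rel 'X_{1..n}).
Hypotheses (gt_irr : irreflexive gt) (gt_trans : transitive gt).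
Hypothesis gt_total : forall a b, a != b -> gt a b || gt b a.
Hypothesis gt_addr : forall c a b, gt a b -> gt (a + c)%MM (b + c)%MM.
Local Notation M := 'X_{1..n}.
Local Notation P := {mpoly F[n]}.
Implicit Types (a b d u : M) (p r : P).

Definition mge a b := (a == b) || gt a b.

Lemma mge_refl a : mge a a.
Proof. by rewrite /mge eqxx. Qed.

Lemma gt_mge_trans b a c : gt a b -> mge b c -> gt a c.
Proof. by move=> h1 /orP [/eqP<-//|]; apply: gt_trans. Qed.

Lemma mge_trans b a c : mge a b -> mge b c -> mge a c.
Proof. by case/orP=> [/eqP->//|h1] h2; rewrite /mge (gt_mge_trans h1 h2) orbT. Qed.

Lemma mge_anti a b : mge a b -> mge b a -> a = b.
Proof.
case/orP=> [/eqP//|h1] /orP [/eqP//|h2].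
by have := gt_trans h1 h2; rewrite gt_irr.
Qed.

Lemma mge_total a b : mge a b || mge b a.
Proof.
rewrite /mge eq_sym; case: (eqVneq b a) => //= ne.
by case/orP: (gt_total ne) => ->; rewrite ?orbT.
Qed.

Lemma mge_addr (c : M) a b : mge a b -> mge (a + c)%MM (b + c)%MM.
Proof. by case/orP=> [/eqP->|/(gt_addr c) h]; rewrite /mge ?eqxx ?h ?orbT. Qed.

Lemma mge_add a b a' b' : mge a a' -> mge b b' -> mge (a + b)%MM (a' + b')%MM.
Proof.
move=> h1 h2; apply: (@mge_trans (a' + b)%MM); first exact: mge_addr.
by rewrite ![(a' + _)%MM]addmC; apply: mge_addr.
Qed.

Lemma mge_add_cancel a b a' b' : mge a a' -> mge b b' ->
  (a + b)%MM = (a' + b')%MM -> a = a' /\ b = b'.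
Proof.
move=> h1 h2 e; suff ea : a = a' by split=> //; subst a'; apply: addmI e.
case/orP: h1 => [/eqP//|g1]; have := gt_mge_trans (gt_addr b g1) (mge_add (mge_refl a') h2).
by rewrite e gt_irr.
Qed.

Definition supp_le p a := forall b, p@_b != 0 -> mge a b.
Definition is_lead p a := p@_a != 0 /\ supp_le p a.

Lemma supp_le0 a : supp_le 0 a.
Proof. by move=> b; rewrite mcoeff0 eqxx. Qed.

Lemma supp_leD p r a : supp_le p a -> supp_le r a -> supp_le (p + r) a.
Proof.
move=> hp hr b; rewrite mcoeffD; case: (eqVneq p@_b 0) => [->|/hp//].
by rewrite add0r => /hr.
Qed.

Lemma supp_leN p a : supp_le p a -> supp_le (- p) a.
Proof. by move=> hp b; rewrite mcoeffN oppr_eq0 => /hp. Qed.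

Lemma supp_leB p r a : supp_le p a -> supp_le r a -> supp_le (p - r) a.
Proof. by move=> hp hr; apply/supp_leD/supp_leN. Qed.

Lemma supp_leZ k p a : supp_le p a -> supp_le (k *: p) a.
Proof. by move=> hp b; rewrite mcoeffZ; case: (eqVneq p@_b 0) => [->|/hp//]; rewrite mulr0 eqxx. Qed.

Lemma supp_le_sum (I : finType) (G : I -> P) a :
  (forall i, supp_le (G i) a) -> supp_le (\sum_i G i) a.
Proof. by move=> h; elim/big_rec: _ => [|i p _]; [apply: supp_le0|apply: supp_leD]. Qed.

Lemma supp_leX a : supp_le 'X_[a] a.
Proof. by move=> b; rewrite mcoeffX; case: (eqVneq a b) => [<-|]; rewrite ?mge_refl ?eqxx. Qed.

Lemma supp_leM p r a b : supp_le p a -> supp_le r b -> supp_le (p * r) (a + b)%MM.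
Proof.
move=> hp hr x; rewrite mcoeff_eq0 negbK => /msuppM_le /allpairsP [[a' b'] /= [ha hb ->]].
by apply: mge_add; [apply: hp|apply: hr]; rewrite -mcoeff_msupp.
Qed.

Lemma mcoeffM_lead p r a b : supp_le p a -> supp_le r b ->
  (p * r)@_(a + b) = p@_a * r@_b.
Proof.
move=> hp hr; have coefE (s : P) c : s@_c = \sum_(x <- msupp s) s@_x * (x == c)%:R.
  by rewrite {1}(mpolyE s) raddf_sum; apply: eq_bigr => x _; rewrite /= mcoeffZ mcoeffX.
rewrite (coefE p a) (coefE r b) big_distrlr /= {1}(mpolyE p) {1}(mpolyE r).
rewrite big_distrlr raddf_sum; apply: eq_big_seq => a' ha; rewrite raddf_sum.
apply: eq_big_seq => b' hb /=; rewrite -scalerAl -scalerAr scalerA -mpolyXD mcoeffZ mcoeffX.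
rewrite mcoeff_msupp in ha; rewrite mcoeff_msupp in hb.
have -> : ((a' + b')%MM == (a + b)%MM) = (a' == a) && (b' == b).
  apply/eqP/andP => [e|[/eqP-> /eqP->]//].
  by have [-> ->] := mge_add_cancel (hp _ ha) (hr _ hb) (esym e).
by case: (a' == a); case: (b' == b); rewrite /= ?mulr1 ?mulr0 ?mul0r.
Qed.

Lemma is_lead_uniq p a b : is_lead p a -> is_lead p b -> a = b.
Proof. by case=> pa hpa [pb hpb]; apply: mge_anti (hpa _ pb) (hpb _ pa). Qed.

Lemma exists_mge_max (r : seq M) : r != [::] ->
  exists2 a, a \in r & forall b, b \in r -> mge a b.
Proof.
elim: r => [//|x r IHr] _; case: (eqVneq r [::]) => [->|/IHr [a ha amax]].
  by exists x; rewrite ?mem_seq1 // => b; rewrite mem_seq1 => /eqP->; apply: mge_refl.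
case/orP: (mge_total a x) => [ax|xa].
- exists a; first by rewrite in_cons ha orbT.
  by move=> b; rewrite in_cons => /orP [/eqP->//|/amax].
- exists x; first by rewrite in_cons eqxx.
  by move=> b; rewrite in_cons => /orP [/eqP->|/amax]; [apply: mge_refl|apply: mge_trans].
Qed.

Lemma exists_lead p : p != 0 -> exists a, is_lead p a.
Proof.
rewrite -msupp_eq0 => /exists_mge_max [a ha amax]; exists a.
by split=> [|b hb]; [rewrite -mcoeff_msupp|apply: amax; rewrite mcoeff_msupp].
Qed.

Lemma exists_supp_le (I : finType) (G : I -> P) : exists d,
  (forall i, supp_le (G i) d) /\ ((exists i, G i != 0) -> exists i, (G i)@_d != 0).
Proof.
pose r := flatten [seq msupp (G i) | i <- enum I].
have in_r b i : (G i)@_b != 0 -> b \in r.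
  move=> h; apply/flattenP; exists (msupp (G i)); last by rewrite mcoeff_msupp.
  by apply/mapP; exists i; rewrite ?mem_enum.
case: (eqVneq r [::]) => [r0|/exists_mge_max [d hd dmax]].
  exists 0%MM; split=> [i b /in_r|[i /exists_lead [a [/in_r]]]]; by rewrite r0.
exists d; split=> [i b /in_r/dmax//|_].
by case/flattenP: hd => x /mapP [i _ ->] hx; exists i; rewrite -mcoeff_msupp.
Qed.

Lemma lead_factor (c g : P) d T : supp_le (c * g) d -> (c * g)@_d != 0 -> is_lead g T ->
  exists u, is_lead c u /\ d = (u + T)%MM.
Proof.
move=> hcg cgd [gT hg].
have /exists_lead [u [cu hc]] : c != 0 by apply: contraNneq cgd => ->; rewrite mul0r mcoeff0.
exists u; split=> //; have hcg' := supp_leM hc hg.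
have cguT : (c * g)@_(u + T) != 0 by rewrite mcoeffM_lead // mulf_neq0.
exact: mge_anti (hcg _ cguT) (hcg' _ cgd).
Qed.

Lemma exists_mul_lead_coef (g : P) T u (k : F) : is_lead g T -> (T <= u)%MM ->
  exists h, supp_le (h * g) u /\ (h * g)@_u = k.
Proof.
move=> [gT hg] Tu; pose w := (u - T)%MM; exists ((k / g@_T) *: 'X_[w]).
have -> : u = (w + T)%MM by rewrite submK.
rewrite -scalerAl; split; first by apply/supp_leZ/supp_leM/hg; apply: supp_leX.
by rewrite mcoeffZ mcoeffM_lead ?mcoeffX ?eqxx ?mul1r ?divfK //; apply: supp_leX.
Qed.

Section CoprimeLeads.
Hypothesis gt_wf : well_founded (fun b a => gt a b).
Variables (I : finType) (g : I -> P) (T : I -> M).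
Hypothesis g_lead : forall i, is_lead (g i) (T i).
Hypothesis T_coprime : forall i j, i != j -> forall x, T i x = 0%N \/ T j x = 0%N.
Implicit Types c : I -> P.

Definition active c d := [set t | (c t * g t)@_d != 0].

Lemma active_exchange c d i j : i != j -> (forall t, supp_le (c t * g t) d) ->
  i \in active c d -> j \in active c d ->
  exists c', \sum_t c' t * g t = \sum_t c t * g t /\
    (forall t, supp_le (c' t * g t) d) /\ active c' d \proper active c d.
Proof.
(* With [d = u_j + T j] and [T i] coprime to [T j], [T i] divides [u_j]; then
   [c_i += h g_j], [c_j -= h g_i] kills the top term of [c_j g_j] for a
   suitable monomial multiple [h]. *)
move=> ij hle; rewrite !inE => ci cj.
have [ui [_ dE]] := lead_factor (hle i) ci (g_lead i).
have [uj [[_ hcj] djE]] := lead_factor (hle j) cj (g_lead j).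
have [_ hgj] := g_lead j.
have Ti_uj : (T i <= uj)%MM.
  by apply: mnm_le_coprime (T_coprime ij) _; rewrite -djE dE lem_addl.
have [h [hhgi hhgi_uj]] := exists_mul_lead_coef (c j)@_uj (g_lead i) Ti_uj.
pose c' t := c t + (t == i)%:R * (h * g j) - (t == j)%:R * (h * g i).
have c'i : c' i * g i = c i * g i + h * g i * g j.
  by rewrite /c' eqxx (negbTE ij) mul0r subr0 mul1r mulrDl mulrAC.
have c'j : c' j * g j = c j * g j - h * g i * g j.
  by rewrite /c' eqxx eq_sym (negbTE ij) mul0r addr0 mul1r mulrBl.
have c't t : t != i -> t != j -> c' t = c t.
  by move=> /negbTE ti /negbTE tj; rewrite /c' ti tj !mul0r addr0 subr0.
have hE : supp_le (h * g i * g j) d by rewrite djE; apply: supp_leM.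
have c'j0 : (c' j * g j)@_d = 0.
  rewrite c'j -mulrBl djE mcoeffM_lead ?mcoeffB ?hhgi_uj ?subrr ?mul0r //.
  exact: supp_leB.
exists c'; split; first exact: syzygy_shift.
split=> [t|].
- case: (eqVneq t i) => [->|ti]; first by rewrite c'i; apply: supp_leD.
  case: (eqVneq t j) => [->|tj]; first by rewrite c'j; apply: supp_leB.
  by rewrite c't.
- apply/properP; split; last by exists j; rewrite !inE ?cj // c'j0 eqxx.
  apply/subsetP => t; rewrite !inE.
  case: (eqVneq t i) => [->//|ti]; case: (eqVneq t j) => [->|tj]; first by rewrite c'j0 eqxx.
  by rewrite c't.
Qed.

Lemma active_reduce c d : (forall t, supp_le (c t * g t) d) ->
  (\sum_t c t * g t)@_d = 0 -> exists c',
    \sum_t c' t * g t = \sum_t c t * g t /\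
    forall t, supp_le (c' t * g t) d /\ (c' t * g t)@_d = 0.
Proof.
have [N] := ubnP #|active c d|; elim: N c => // N IHN c actN hle sum0.
case: (set_0Vmem (active c d)) => [act0|[i ci]].
  exists c; split=> // t; split; first exact: hle.
  have : t \notin active c d by rewrite act0 inE.
  by rewrite inE negbK => /eqP.
have sum_d : \sum_t (c t * g t)@_d = 0 by rewrite -raddf_sum.
have ci' : (c i * g i)@_d != 0 by rewrite inE in ci.
have [j ji cj] := sumr_eq0_other sum_d ci'.
have cj' : j \in active c d by rewrite inE.
have [c' [sum' [hle' act']]] := active_exchange ji hle cj' ci.
have act'N : (#|active c' d| < N)%N := leq_trans (proper_card act') actN.
have sum0' : (\sum_t c' t * g t)@_d = 0 by rewrite sum'.
have [c'' [sum'' hc'']] := IHN c' act'N hle' sum0'.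
by exists c''; rewrite sum'' sum'.
Qed.

Theorem lead_coprime_divides c mf : is_lead (\sum_t c t * g t) mf ->
  exists i, (T i <= mf)%MM.
Proof.
set f := \sum_t c t * g t => -[fmf fle].
suff main d c' : (forall t, supp_le (c' t * g t) d) -> \sum_t c' t * g t = f ->
    exists i, (T i <= mf)%MM.
  by have [d [hle _]] := exists_supp_le (fun t => c t * g t); apply: main hle _.
elim/(well_founded_ind gt_wf): d c' => d IHd c' hle sum'.
case: (eqVneq f@_d 0) => [fd0|fd].
- rewrite -sum' in fd0; have [c'' [sum'' hc'']] := active_reduce hle fd0.
  have [d' [hle' nz']] := exists_supp_le (fun t => c'' t * g t).
  have [j cj] : exists j, (c'' j * g j)@_d' != 0.
    rewrite -sum' -sum'' raddf_sum in fmf; have [j /= cj] := exists_neq0_summand fmf.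
    by apply: nz'; exists j; apply: contraNneq cj => ->; rewrite mcoeff0.
  apply: (IHd d' _ c'' hle' (etrans sum'' sum')).
  case/orP: (proj1 (hc'' j) _ cj) => [/eqP dd'|//].
  by move: cj; rewrite -dd' (proj2 (hc'' j)) eqxx.
- have mfE : mf = d.
    by apply: mge_anti (fle _ fd) _; rewrite -sum' in fmf; apply: supp_le_sum hle _ fmf.
  rewrite -sum' raddf_sum in fd; have [i /= ci] := exists_neq0_summand fd.
  have [u [_ dE]] := lead_factor (hle i) ci (g_lead i).
  by exists i; rewrite mfE dE lem_addl.
Qed.

End CoprimeLeads.

End LeadingMonomials.

(** * The variable order of the paper *)

Definition vkey k m (v : vtriple k m) : nat :=
  let: (l, i, j) := v in ((l * m + (m.-1 - i)) * m + (m.-1 - j))%N.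

Lemma var_gtE k m (v w : vtriple k m) : var_gt v w = (vkey w < vkey v)%N.
Proof.
case: v w => [[l i] j] [[l' i'] j'] /=.
have := ltn_ord i; have := ltn_ord j; have := ltn_ord i'; have := ltn_ord j'.
rewrite -!val_eqE /=.
move: (l : nat) (i : nat) (j : nat) (l' : nat) (i' : nat) (j' : nat) => a b c a' b' c' *.
apply/idP/idP; nia.
Qed.

Lemma var_gt_total k m (v w : vtriple k m) : v != w -> var_gt v w || var_gt w v.
Proof.
case: v w => [[l i] j] [[l' i'] j'] /=; rewrite !xpair_eqE -!val_eqE /=.
lia.
Qed.

Lemma vkey_inj k m : injective (@vkey k m).
Proof.
move=> v w e; apply/eqP; apply: contraT => /var_gt_total.
by rewrite !var_gtE e ltnn.
Qed.

Definition var_key k m (x : 'I_(nvars k m)) : nat := vkey (enum_val x).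

Lemma var_key_inj k m : injective (@var_key k m).
Proof. by move=> x y /vkey_inj/enum_val_inj. Qed.

Lemma grevlex_gtP k m (a b : 'X_{1..nvars k m}) :
  grevlex_gt a b <-> grevlexb (@var_key k m) a b.
Proof.
rewrite /grevlex_gt /grevlexb /expo /vidx /var_key; split.
- case=> [->//|[-> [v [h1 h2]]]]; apply/orP; right; rewrite eqxx /=; apply/existsP.
  exists (enum_rank v); rewrite h1 /=; apply/forallP => x; apply/implyP => hx.
  by rewrite -(enum_valK x); apply/eqP/h2; rewrite var_gtE -(enum_rankK v).
- case/orP=> [h|/andP [/eqP e /existsP [x /andP [h1 /forallP h2]]]]; [by left|right].
  split=> //; exists (enum_val x); rewrite enum_valK; split=> // w hw.
  by apply/eqP/(implyP (h2 (enum_rank w))); rewrite enum_rankK -var_gtE.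
Qed.

(** * The coefficients [d_q] of [det X(t)] and their leading monomials *)

Section DeterminantCoefficients.
Variables (F : closedFieldType) (k m : nat).
Local Notation M := 'X_{1..nvars k m}.
Local Notation V := (vtriple k m).
Implicit Types (s : 'S_m) (L : {ffun 'I_m -> 'I_k}).

Definition mono s L : M :=
  (\sum_(i < m) U_(vidx ((L i, i, s i) : V)))%MM.

Lemma expo_mono s L (l : 'I_k) (i j : 'I_m) :
  expo (mono s L) (l, i, j) = ((L i == l) && (s i == j)) :> nat.
Proof.
rewrite /expo /mono mnm_sumE (bigD1 i) //= mnm1E (inj_eq enum_rank_inj) big1 ?addn0.
  by rewrite !xpair_eqE eqxx andbT.
by move=> t ti; rewrite mnm1E (inj_eq enum_rank_inj) !xpair_eqE (negbTE ti) andbF.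
Qed.

Lemma mdeg_mono s L : mdeg (mono s L) = m.
Proof.
rewrite /mono mdeg_sum; under eq_bigr => i _ do rewrite mdeg1.
by rewrite sum_nat_const card_ord muln1.
Qed.

Lemma mono_inj s L s' L' : mono s L = mono s' L' -> s = s' /\ L = L'.
Proof.
move=> e; have same i : L' i = L i /\ s' i = s i.
  have := expo_mono s' L' (L i) i (s i); rewrite -e expo_mono !eqxx /=.
  by case: eqP => // ->; case: eqP.
by split; [apply/permP|apply/ffunP] => i; case: (same i).
Qed.

Lemma dcoefE q : dcoef F k m q = \sum_(s : 'S_m) \sum_(L : {ffun 'I_m -> 'I_k})
  ((-1) ^+ s * 'X_[mono s L]) *+ ((\sum_i (L i : nat))%N == q).
Proof.
rewrite /dcoef /determinant coef_sum; apply: eq_bigr => s _.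
rewrite -(rmorph_sign polyC) coefCM.
under eq_bigr => i _ do rewrite /Xt mxE.
rewrite bigA_distr_bigA coef_sum mulr_sumr; apply: eq_bigr => L _.
rewrite big_split /= -rmorph_prod prodrXr coefCM coefXn.
by rewrite /xvar mprodXE -/(mono s L) mulrA mulr_natr eq_sym.
Qed.

Lemma mcoeff_dcoef q x : (dcoef F k m q)@_x =
  \sum_(s : 'S_m) \sum_(L : {ffun 'I_m -> 'I_k})
    ((-1) ^+ s *+ (mono s L == x)) *+ ((\sum_i (L i : nat))%N == q).
Proof.
rewrite dcoefE raddf_sum; apply: eq_bigr => s _; rewrite raddf_sum; apply: eq_bigr => L _.
by rewrite /= mcoeffMn !mulr_sign; case: (s : bool); rewrite ?mcoeffN mcoeffX ?mulNrn.
Qed.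

Lemma mcoeff_dcoef_mono q s L : (\sum_i (L i : nat))%N = q ->
  (dcoef F k m q)@_(mono s L) = (-1) ^+ s.
Proof.
move=> sumL; rewrite mcoeff_dcoef (bigD1 s) //= (bigD1 L) //= eqxx sumL eqxx.
rewrite !mulr1n big1 => [|L' L'L]; last first.
  by case: eqP => [/mono_inj [_ eL]|_]; [rewrite eL eqxx in L'L|rewrite mulr0n mul0rn].
rewrite addr0 big1 ?addr0 // => s' s's; apply: big1 => L' _.
by case: eqP => [/mono_inj [es _]|_]; [rewrite es eqxx in s's|rewrite mulr0n mul0rn].
Qed.

Lemma msupp_dcoef q x : (dcoef F k m q)@_x != 0 ->
  exists s L, (\sum_i (L i : nat))%N = q /\ x = mono s L.
Proof.
rewrite mcoeff_dcoef => /exists_neq0_summand [s /exists_neq0_summand [L /= nz]].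
by exists s, L; split; [|apply: esym]; apply/eqP; apply: contraNT nz => /negbTE ->; rewrite ?mulr0n ?mul0rn.
Qed.

End DeterminantCoefficients.

Section LeadingMonomial.
Variables (k m : nat) (q : 'I_k).
Hypothesis m_gt0 : (0 < m)%N.
Local Notation V := (vtriple k m).
Local Open Scope nat_scope.

Definition lam := q %/ m.
Definition mu := q %% m.

Definition lead_layer (i : nat) := if i < m - mu then lam else lam.+1.
Definition lead_col (i : nat) := if i < m - mu then m - mu - 1 - i else 2 * m - mu - 1 - i.

Lemma mu_lt : mu < m.
Proof. by rewrite ltn_mod. Qed.

Lemma lead_layer_lt (i : 'I_m) : lead_layer i < k.
Proof.
have := ltn_ord i; have := ltn_ord q; have := mu_lt; rewrite (divn_eq q m) -/lam -/mu.
by rewrite /lead_layer; case: ifP => *; nia.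
Qed.

Lemma lead_col_lt (i : 'I_m) : lead_col i < m.
Proof. by have := ltn_ord i; have := mu_lt; rewrite /lead_col; case: ifP => *; lia. Qed.

Definition lead_colf (i : 'I_m) : 'I_m := Ordinal (lead_col_lt i).

Lemma lead_colf_inj : injective lead_colf.
Proof.
move=> i j /(congr1 val); rewrite /= /lead_col => e; apply: ord_inj.
have := ltn_ord i; have := ltn_ord j; have := mu_lt.
by move: e; case: (ltnP i (m - mu)); case: (ltnP j (m - mu)); lia.
Qed.

Definition lead_perm : 'S_m := perm lead_colf_inj.
Definition lead_layers : {ffun 'I_m -> 'I_k} := [ffun i => Ordinal (lead_layer_lt i)].
Definition lead_mono : 'X_{1..nvars k m} := mono lead_perm lead_layers.

Lemma lead_permE i : lead_perm i = lead_col i :> nat.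
Proof. by rewrite permE. Qed.

Lemma lead_layersE i : lead_layers i = lead_layer i :> nat.
Proof. by rewrite ffunE. Qed.

Lemma sum_lead_layers : \sum_i (lead_layers i : nat) = q.
Proof.
under eq_bigr => i _ do rewrite lead_layersE.
rewrite -(big_mkord xpredT lead_layer) (big_cat_nat _ (leq_subr mu m)) //=.
rewrite (eq_big_nat _ _ (F2 := fun _ => lam)); last first.
  by move=> i /andP [_ h]; rewrite /lead_layer h.
rewrite [X in _ + X](eq_big_nat _ _ (F2 := fun _ => lam.+1)); last first.
  by move=> i /andP [h _]; rewrite /lead_layer ltnNge h.
have := mu_lt; rewrite !sum_nat_const_nat (divn_eq q m) -/lam -/mu; nia.
Qed.

Lemma var_gt_lead_layer (r i : 'I_m) (l : 'I_k) (c j : 'I_m) :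
  l < lead_layers i -> var_gt ((lead_layers r, r, c) : V) (l, i, j).
Proof.
rewrite /var_gt -!val_eqE /= !lead_layersE /lead_layer.
by case: (ltnP i (m - mu)); case: (ltnP r (m - mu)); lia.
Qed.

Lemma var_gt_lead_col (r i : 'I_m) : lead_perm i < lead_perm r ->
  var_gt ((lead_layers r, r, lead_perm r) : V) (lead_layers i, i, lead_perm i).
Proof.
rewrite /var_gt -!val_eqE /= !lead_layersE !lead_permE /lead_layer /lead_col.
have := mu_lt; have := ltn_ord i; have := ltn_ord r.
by case: (ltnP i (m - mu)); case: (ltnP r (m - mu)); lia.
Qed.

Lemma grevlex_gt_lead_mono (s : 'S_m) (L : {ffun 'I_m -> 'I_k}) :
  \sum_i (L i : nat) = q -> ~ grevlex_gt (mono s L) lead_mono.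
Proof.
(* At the smallest variable [v] where they differ, in row [r], only [lead_mono]
   is present. Agreement below [v] gives [lead_layers <= L] pointwise (a lower
   layer would lie below [v]), hence [L = lead_layers] as both sum to [q]; then
   the column of row [r] is forced as well. *)
move=> sumL [|[_ [[[l0 r] c0] [lt_r agree]]]]; first by rewrite !mdeg_mono ltnn.
move: agree lt_r; rewrite !expo_mono.
case: (lead_layers r =P l0) => [<-|]; last by rewrite andbC.
case: (lead_perm r =P c0) => [<- agree|]; last by rewrite andbF.
rewrite /= ltnS leqn0 eqb0 negb_and => off_r.
pose v : V := (lead_layers r, r, lead_perm r).
have below_in i : var_gt v (L i, i, s i) -> L i = lead_layers i /\ s i = lead_perm i.
  by move=> hv; have := agree _ hv; rewrite !expo_mono !eqxx; do 2 case: eqP => //.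
have below_lead i : var_gt v (lead_layers i, i, lead_perm i) -> L i = lead_layers i /\ s i = lead_perm i.
  by move=> hv; have := agree _ hv; rewrite !expo_mono !eqxx; do 2 case: eqP => //.
have L_ge i : lead_layers i <= L i.
  rewrite leqNgt; apply/negP => lt_i.
  by have [e _] := below_in i (var_gt_lead_layer _ _ _ lt_i); rewrite e ltnn in lt_i.
have LE : L = lead_layers.
  have := (@leqif_sum _ xpredT _ _ _ (fun i _ => leqif_eq (L_ge i))).2.
  rewrite sum_lead_layers sumL eqxx => /esym/forallP eqs.
  by apply/ffunP => i; apply/ord_inj/esym/eqP; apply: (implyP (eqs i)).
subst L; rewrite eqxx /= in off_r.
case: (ltngtP (s r) (lead_perm r)) => [lt_r|gt_r|/ord_inj eq_r]; last by rewrite eq_r eqxx in off_r.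
- pose i := (lead_perm^-1)%g (s r); have ei : lead_perm i = s r by rewrite permKV.
  have lt_i : lead_perm i < lead_perm r by rewrite ei.
  have [_ si] := below_lead i (var_gt_lead_col lt_i).
  have ir : i = r by apply: (@perm_inj _ s); rewrite si.
  by rewrite ir in ei; rewrite ei ltnn in lt_r.
- have : var_gt v (lead_layers r, r, s r) by rewrite /v /var_gt /= !ltnn !eqxx gt_r orbT.
  by case/below_in=> _ sr; rewrite sr ltnn in gt_r.
Qed.

End LeadingMonomial.

Section GrevlexLeads.
Variables (F : closedFieldType) (k m : nat).
Hypothesis m_gt0 : (0 < m)%N.
Local Notation grevlex := (grevlexb (@var_key k m)).

Lemma is_LM_is_lead (p : S F k m) a : is_LM p a <-> is_lead grevlex p a.
Proof.
split=> [[pa amax]|[pa amax]]; split.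
- by rewrite -mcoeff_msupp.
- move=> b pb; rewrite /mge; case: eqVneq => //= ab.
  by apply/grevlex_gtP/amax; rewrite ?mcoeff_msupp // eq_sym.
- by rewrite mcoeff_msupp.
- move=> b pb ba; apply/grevlex_gtP; rewrite mcoeff_msupp in pb.
  by case/orP: (amax _ pb) => // /eqP ab; rewrite ab eqxx in ba.
Qed.

Lemma is_lead_dcoef (q : 'I_k) : is_lead grevlex (dcoef F k m q) (lead_mono q m_gt0).
Proof.
split; first by rewrite mcoeff_dcoef_mono ?sum_lead_layers ?signr_eq0.
move=> _ /msupp_dcoef [s [L [sumL ->]]]; rewrite /mge; case: eqVneq => //= ne.
have := grevlexb_total (@var_key k m) ne; case/orP => // /grevlex_gtP.
by case/(grevlex_gt_lead_mono sumL).
Qed.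

Lemma in_claimed_LM_lead (q : 'I_k) (l : 'I_k) (i j : 'I_m) :
  in_claimed_LM q ((l, i, j) : vtriple k m) =
  (lead_layers q m_gt0 i == l) && (lead_perm q m_gt0 i == j).
Proof.
rewrite /in_claimed_LM -!val_eqE /= lead_layersE lead_permE /lead_layer /lead_col -/(lam m q) -/(mu m q).
have := mu_lt q m_gt0; have := ltn_ord i; have := ltn_ord j.
by case: (ltnP i (m - mu m q)) => *; apply/idP/idP; lia.
Qed.

Lemma claimed_LM_lead (q : 'I_k) : 'X_[lead_mono q m_gt0] = claimed_LM F k m q.
Proof.
rewrite /claimed_LM /xvar mprodXE; congr 'X_[_]; apply/mnmP => x.
rewrite -(enum_valK x); case: (enum_val x) => [[l i] j].
rewrite -/(vidx _) -/(expo _ _) expo_mono -in_claimed_LM_lead mnm_sumE.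
rewrite (eq_bigr (fun v => (v == (l, i, j)) : nat)); last first.
  by move=> v _; rewrite mnm1E (inj_eq enum_rank_inj).
case: (boolP (in_claimed_LM _ _)) => lij.
  by rewrite (bigD1 (l, i, j)) //= eqxx big1 // => v /andP [_ /negbTE ->].
by rewrite big1 // => v vc; apply/eqP; rewrite eqb0; apply: contraNneq lij => <-.
Qed.

Lemma in_claimed_LM_inj (q q' : 'I_k) (v : vtriple k m) :
  in_claimed_LM q v -> in_claimed_LM q' v -> q = q'.
Proof.
case: v => [[l i] j]; rewrite /in_claimed_LM => cq cq'; apply: ord_inj.
by have := ltn_ord i; have := ltn_ord j; move: cq cq'; lia.
Qed.

Lemma lead_mono_disjoint (q q' : 'I_k) : q != q' ->
  forall x, lead_mono q m_gt0 x = 0%N \/ lead_mono q' m_gt0 x = 0%N.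
Proof.
move=> qq' x; rewrite -(enum_valK x); case: (enum_val x) => [[l i] j].
rewrite -/(vidx _) -!/(expo _ _) !expo_mono -!in_claimed_LM_lead.
case: (boolP (in_claimed_LM q _)) => cq; last by left.
case: (boolP (in_claimed_LM q' _)) => cq'; last by right.
by rewrite (in_claimed_LM_inj cq cq') eqxx in qq'.
Qed.

End GrevlexLeads.

Theorem theorem3p2 (F : closedFieldType) (m k : nat) (hm : (1 <= m)%N) (hk : (1 <= k)%N) :
  is_groebner_basis_d F k m /\
  (forall q : 'I_k, exists mq, is_LM (dcoef F k m q) mq /\ 'X_[mq] = claimed_LM F k m q) /\
  (forall (q q' : 'I_k) mq mq', q != q' ->
     is_LM (dcoef F k m q) mq -> is_LM (dcoef F k m q') mq' ->
     forall v : vtriple k m, expo mq v = 0%N \/ expo mq' v = 0%N).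
Proof.
have key_inj := @var_key_inj k m.
have gt_irr := grevlexb_irr (@var_key k m).
have gt_trans := grevlexb_trans key_inj.
have gt_wf := mdeg_bounded_wf gt_irr gt_trans (@grevlexb_mdeg _ _).
have lead (q : 'I_k) := is_lead_dcoef F hm q.
have lead_LM (q : 'I_k) := (is_LM_is_lead _ _).2 (lead q).
split; [split|split].
- by move=> q; exists (fun t => (t == q)%:R); rewrite sumr_nat_delta.
- move=> f [c ->] _ mf /is_LM_is_lead fmf.
  have [q Tq] := lead_coprime_divides gt_irr gt_trans (grevlexb_total _)
    (@grevlexb_addr _ _) gt_wf lead (lead_mono_disjoint hm) fmf.
  by exists q, (lead_mono q hm); split; [exact: lead_LM|exact/mnm_lepP].
- by move=> q; exists (lead_mono q hm); split; [exact: lead_LM|exact: claimed_LM_lead].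
- move=> q q' mq mq' qq' /is_LM_is_lead Lq /is_LM_is_lead Lq' v.
  rewrite (is_lead_uniq gt_irr gt_trans Lq (lead q)).
  rewrite (is_lead_uniq gt_irr gt_trans Lq' (lead q')).
  exact: lead_mono_disjoint.
Qed.
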